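(* Let $(U,\tau_R,\rho)$ be a general ordered topological approximation space and $A\subseteq U$. If $A$ is $R$-increasing exact, i.e. $\underline{R}_{Inc}(A)=\overline{R}^{Inc}(A)$, then $A$ is $\alpha$-increasing exact, i.e. $\underline{\alpha}_{Inc}(A)=\overline{\alpha}^{Inc}(A)$. Likewise, if $\underline{R}_{Dec}(A)=\overline{R}^{Dec}(A)$, then $\underline{\alpha}_{Dec}(A)=\overline{\alpha}^{Dec}(A)$.
   Context: A general ordered topological approximation space (GOTAS) is a triple $(U,\tau_R,\rho)$ where $U$ is a non-empty set, $R$ is a binary relation on $U$, $\tau_R$ is a topology on $U$ generated by $R$, and $\rho$ is a partial order on $U$. A subset $A\subseteq U$ is increasing (resp. decreasing) if whenever $a\in A$, $x\in U$ and $a\,\rho\,x$ (resp. $x\,\rho\,a$), then $x\in A$. For $A\subseteq U$: $\underline{R}_{Inc}(A)$ is the greatest subset of $A$ that is both $\tau_R$-open and increasing; $\underline{R}_{Dec}(A)$ is the greatest subset of $A$ that is $\tau_R$-open and decreasing; $\overline{R}^{Inc}(A)$ is the smallest superset of $A$ that is $\tau_R$-closed and increasing; $\overline{R}^{Dec}(A)$ is the smallest superset of $A$ that is $\tau_R$-closed and decreasing. Define $\underline{\alpha}_{Inc}(A)=A\cap\underline{R}_{Inc}(\overline{R}^{Inc}(\underline{R}_{Inc}(A)))$, $\overline{\alpha}^{Inc}(A)=A\cup\overline{R}^{Inc}(\underline{R}_{Inc}(\overline{R}^{Inc}(A)))$, $\underline{\alpha}_{Dec}(A)=A\cap\underline{R}_{Dec}(\overline{R}^{Dec}(\underline{R}_{Dec}(A)))$,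 $\overline{\alpha}^{Dec}(A)=A\cup\overline{R}^{Dec}(\underline{R}_{Dec}(\overline{R}^{Dec}(A)))$. *)

Set Implicit Arguments.

Section GOTAS.
Variable U : Type.

Definition subset (A B : U -> Prop) : Prop := forall x, A x -> B x.

Definition is_topology (T : (U -> Prop) -> Prop) : Prop :=
  T (fun _ => True) /\
  (forall F : (U -> Prop) -> Prop, (forall B, F B -> T B) ->
      T (fun x => exists B, F B /\ B x)) /\
  (forall A B, T A -> T B -> T (fun x => A x /\ B x)).

(* The topology tau_R generated by the relation R: the smallest topology
   having the after-sets xR = {y | R x y} as a subbase. *)
Definition tauR (R : U -> U -> Prop) (A : U -> Prop) : Prop :=
  forall T, is_topology T -> (forall x, T (fun y => R x y)) -> T A.

Definition R_open (R : U -> U -> Prop) (A : U -> Prop) : Prop := tauR R A.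
Definition R_closed (R : U -> U -> Prop) (A : U -> Prop) : Prop :=
  tauR R (fun x => ~ A x).

Definition partial_order (rho : U -> U -> Prop) : Prop :=
  (forall x, rho x x) /\
  (forall x y, rho x y -> rho y x -> x = y) /\
  (forall x y z, rho x y -> rho y z -> rho x z).

Definition increasing (rho : U -> U -> Prop) (A : U -> Prop) : Prop :=
  forall a x, A a -> rho a x -> A x.
Definition decreasing (rho : U -> U -> Prop) (A : U -> Prop) : Prop :=
  forall a x, A a -> rho x a -> A x.

Definition lowR_Inc R rho (A : U -> Prop) : U -> Prop :=
  fun x => exists B, subset B A /\ R_open R B /\ increasing rho B /\ B x.
Definition lowR_Dec R rho (A : U -> Prop) : U -> Prop :=
  fun x => exists B, subset B A /\ R_open R B /\ decreasing rho B /\ B x.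
Definition uppR_Inc R rho (A : U -> Prop) : U -> Prop :=
  fun x => forall B, subset A B -> R_closed R B -> increasing rho B -> B x.
Definition uppR_Dec R rho (A : U -> Prop) : U -> Prop :=
  fun x => forall B, subset A B -> R_closed R B -> decreasing rho B -> B x.

Definition lowAlpha_Inc R rho (A : U -> Prop) : U -> Prop :=
  fun x => A x /\ lowR_Inc R rho (uppR_Inc R rho (lowR_Inc R rho A)) x.
Definition uppAlpha_Inc R rho (A : U -> Prop) : U -> Prop :=
  fun x => A x \/ uppR_Inc R rho (lowR_Inc R rho (uppR_Inc R rho A)) x.
Definition lowAlpha_Dec R rho (A : U -> Prop) : U -> Prop :=
  fun x => A x /\ lowR_Dec R rho (uppR_Dec R rho (lowR_Dec R rho A)) x.
Definition uppAlpha_Dec R rho (A : U -> Prop) : U -> Prop :=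
  fun x => A x \/ uppR_Dec R rho (lowR_Dec R rho (uppR_Dec R rho A)) x.

End GOTAS.

From Stdlib Require Import FunctionalExtensionality PropExtensionality.

(* The lower operators are deflationary and the upper ones inflationary, so
   exactness forces both to equal [A]; then every composite in the alpha
   operators collapses to [A], and so do the alpha operators themselves. *)

Section Exactness.
Variable U : Type.

Lemma set_ext (P Q : U -> Prop) : (forall x, P x <-> Q x) -> P = Q.
Proof.
  intro H; apply functional_extensionality; intro x.
  now apply propositional_extensionality.
Qed.

Section Sandwich.
Variables low upp : (U -> Prop) -> U -> Prop.
Variable A : U -> Prop.
Hypothesis low_sub : subset (low A) A.
Hypothesis sub_upp : subset A (upp A).

Lemma exact_low_eq (E : low A = upp A) : low A = A.
Proof.
  apply set_ext; intro x; split; [apply low_sub | ].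
  intro Ax; rewrite E; exact (sub_upp x Ax).
Qed.

Lemma exact_upp_eq (E : low A = upp A) : upp A = A.
Proof. rewrite <- E; exact (exact_low_eq E). Qed.

Lemma exact_alpha_eq (E : low A = upp A) :
  (fun x => A x /\ low (upp (low A)) x) = (fun x => A x \/ upp (low (upp A)) x).
Proof.
  rewrite (exact_low_eq E), (exact_upp_eq E), (exact_low_eq E), (exact_upp_eq E).
  apply set_ext; intro x; tauto.
Qed.

End Sandwich.

Variables R rho : U -> U -> Prop.

Lemma lowR_Inc_sub (A : U -> Prop) : subset (lowR_Inc R rho A) A.
Proof. intros x [B [HB [_ [_ Bx]]]]; exact (HB _ Bx). Qed.

Lemma lowR_Dec_sub (A : U -> Prop) : subset (lowR_Dec R rho A) A.
Proof. intros x [B [HB [_ [_ Bx]]]]; exact (HB _ Bx). Qed.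

Lemma sub_uppR_Inc (A : U -> Prop) : subset A (uppR_Inc R rho A).
Proof. intros x Ax B HB _ _; exact (HB _ Ax). Qed.

Lemma sub_uppR_Dec (A : U -> Prop) : subset A (uppR_Dec R rho A).
Proof. intros x Ax B HB _ _; exact (HB _ Ax). Qed.

End Exactness.

Theorem proposition3p4 (U : Type) (R rho : U -> U -> Prop)
  (Hrho : partial_order rho) (A : U -> Prop) :
  (lowR_Inc R rho A = uppR_Inc R rho A ->
     lowAlpha_Inc R rho A = uppAlpha_Inc R rho A) /\
  (lowR_Dec R rho A = uppR_Dec R rho A ->
     lowAlpha_Dec R rho A = uppAlpha_Dec R rho A).
Proof.
  split; intro E.
  - apply exact_alpha_eq; [apply lowR_Inc_sub | apply sub_uppR_Inc | exact E].
  - apply exact_alpha_eq; [apply lowR_Dec_sub | apply sub_uppR_Dec | exact E].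
Qed.
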